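(* For every positive integer $n$, the number of circular permutations of $[n]=\{1,2,\ldots,n\}$ that avoid the pattern $1234$ equals $2^{n}+1-2n-\binom{n}{3}$.
   Context: A circular permutation of $[n]$ is an arrangement of $1,2,\ldots,n$ clockwise around a circle, two arrangements being identified if they differ by a rotation. Equivalently, it can be represented uniquely as a linear permutation $\pi_1\pi_2\cdots\pi_n$ of $[n]$ with $\pi_n=n$, whose rotations all represent the same circular permutation. The reduced form of a sequence of distinct positive integers is obtained by replacing its smallest entry by $1$, its next smallest by $2$, and so on; a pattern is such a reduced form. An occurrence of a pattern $\tau$ of length $m$ in a circular permutation $\pi$ is a sequence of $m$ letters of $\pi$ read in clockwise order and lying within one revolution (i.e., a subsequence of some rotation of the linear representation) whose reduced form is $\tau$; $\pi$ avoids $\tau$ if it has no occurrence of $\tau$. Here $\binom{n}{3}=0$ for $n<3$. *)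

From mathcomp Require Import all_boot all_order all_algebra.
Set Implicit Arguments. Unset Strict Implicit. Unset Printing Implicit Defensive.

Definition red (t : seq nat) : seq nat := [seq count (fun y => y <= x) t | x <- t].

(* An occurrence of the pattern tau in the circular permutation represented by
   the linear word s: a subsequence (selected by a mask) of some rotation of s
   whose reduced form is tau. *)
Definition occurs_circ (tau s : seq nat) : bool :=
  [exists i : 'I_(size s), exists m : (size s).-tuple bool,
     red (mask m (rot i s)) == tau].

Definition avoids_circ (tau s : seq nat) : bool := ~~ occurs_circ tau s.

(* Circular permutations of [n], represented uniquely by the linear
   permutations of 1..n whose last entry is n. *)
Definition circ_perms (n : nat) : seq (seq nat) :=
  [seq s <- permutations (iota 1 n) | last 0 s == n].

From mathcomp Require Import all_boot all_order all_algebra.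
From mathcomp Require Import zify.
Set Implicit Arguments. Unset Strict Implicit. Unset Printing Implicit Defensive.

(* With n written last, an occurrence of 1234 in a rotation of t ++ [:: n] either ends with n,
   giving a 123 in t, or wraps around without n, giving a 3412 in t.  So the circular
   avoiders of [n] correspond to the permutations of [n - 1] avoiding 123 and 3412.
   Such a permutation of [k + 1] is A ++ k.+1 :: B where A is decreasing, A ++ B is again
   an avoider, and no entry of A lies above an ascent of B.  Either A is empty; or B is
   decreasing as well and A is any nonempty subset of [k] (2^k - 1 choices); or B has an
   ascent, which forces A to be a block p+1, ..., p+r of consecutive values and B to be an
   interleaving, other than the decreasing one, of the decreasing runs of the p lower and
   the q = k - p - r upper values ('C(p + q, p) - 1 choices).  The resulting recursion
   a(k + 1) = a(k) + 2^k - 1 + \sum_(s < k) (2^s - s - 1) solves to the stated formula. *)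

(** * Subsequences and shuffles *)

Section Subsequences.
Variable T : eqType.
Implicit Types (x y : T) (s t u v : seq T).

Lemma cons_injr x : injective (@cons T x).
Proof. by move=> ? ? []. Qed.

Lemma subseq_cat_split s t1 t2 : subseq s (t1 ++ t2) ->
  exists s1 s2, [/\ s = s1 ++ s2, subseq s1 t1 & subseq s2 t2].
Proof.
move=> /subseqP[m sz_m ->].
have sz_take : size (take (size t1) m) = size t1.
  by rewrite size_takel // sz_m size_cat leq_addr.
exists (mask (take (size t1) m) t1), (mask (drop (size t1) m) t2).
by rewrite -mask_cat // cat_take_drop !mask_subseq.
Qed.

Lemma cat_subseq_split s1 s2 t : subseq (s1 ++ s2) t ->
  exists t1 t2, [/\ t = t1 ++ t2, subseq s1 t1 & subseq s2 t2].
Proof.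
elim: t s1 => [|x t IHt] [|y s1] //= sub.
- by exists [::], [::].
- by exists [::], (x :: t).
case: eqP sub => [-> | _] sub.
  by have [t1 [t2 [-> ? ?]]] := IHt s1 sub; exists (x :: t1), t2; rewrite /= eqxx.
have [t1 [t2 [-> sub1 ?]]] := IHt (y :: s1) sub.
by exists (x :: t1), t2; split=> //; apply: subseq_trans sub1 (subseq_cons _ _).
Qed.

Lemma subseq_pivot t A B x : subseq t (A ++ x :: B) ->
  subseq t (A ++ B) \/ exists u v, [/\ t = u ++ x :: v, subseq u A & subseq v B].
Proof.
move=> /subseq_cat_split[u [[|y w] [-> subA subB]]].
  by left; rewrite cats0; apply: subseq_trans subA (prefix_subseq _ _).
move: subB => /=; case: eqP => [-> | _] subB; last by left; apply: cat_subseq.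
by right; exists u, w.
Qed.

Lemma subseq2_index s x y : uniq s ->
  subseq [:: x; y] s = [&& x \in s, y \in s & index x s < index y s].
Proof.
elim: s => [|z s IHs] //= /andP[zNs s_uniq]; rewrite !inE.
case: (eqVneq x z) => [-> | xNz] /=; last rewrite IHs //;
  case: (eqVneq y z) => [-> | yNz]; rewrite ?sub1seq ?eqxx ?(eq_sym z) ?(negPf yNz) //=.
- by rewrite (negPf zNs).
- by rewrite andbT.
- by rewrite (negPf zNs) andbF.
Qed.

Fixpoint subseqs s : seq (seq T) :=
  if s is x :: s' then [seq x :: t | t <- subseqs s'] ++ subseqs s' else [:: [::]].

Lemma size_subseqs s : size (subseqs s) = 2 ^ size s.
Proof. by elim: s => //= x s IHs; rewrite size_cat size_map IHs expnS mul2n addnn. Qed.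

Lemma mem_subseqs s t : (t \in subseqs s) = subseq t s.
Proof.
elim: s t => [|x s IHs] [|y t] //=; rewrite mem_cat ?IHs ?sub0seq ?orbT //.
have [-> | yNx] := eqVneq y x.
  rewrite (mem_map (@cons_injr x)) IHs.
  by apply/orP/idP => [[// | /cons_subseq //] | ->]; left.
apply/orP/idP => [[/mapP[? _ [yx _]] | //] | ->]; last by right.
by rewrite yx eqxx in yNx.
Qed.

Lemma subseqs_uniq s : uniq s -> uniq (subseqs s).
Proof.
elim: s => [|x s IHs] //= /andP[xNs s_uniq].
rewrite cat_uniq (map_inj_uniq (@cons_injr x)) IHs //= andbT.
apply/hasPn => t; rewrite mem_subseqs => /mem_subseq t_sub.
by apply/mapP => -[t' _ t_eq]; rewrite t_eq in t_sub; rewrite t_sub ?mem_head in xNs.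
Qed.

Lemma subseq_cons_notin x s t : x \notin s -> subseq s (x :: t) = subseq s t.
Proof.
case: s => [|y s]; first by rewrite !sub0seq.
by rewrite inE negb_or eq_sym /= => /andP[/negPf->].
Qed.

Fixpoint shuffles s t : seq (seq T) :=
  if s is x :: s' then
    let fix shuffles_s t :=
      if t is y :: t' then [seq x :: u | u <- shuffles s' t] ++ [seq y :: u | u <- shuffles_s t']
      else [:: s] in
    shuffles_s t
  else [:: t].

Lemma shuffles_cons x s y t : shuffles (x :: s) (y :: t) =
  [seq x :: u | u <- shuffles s (y :: t)] ++ [seq y :: u | u <- shuffles (x :: s) t].
Proof. by []. Qed.

Lemma shuffless0 s : shuffles s [::] = [:: s].
Proof. by case: s. Qed.

Lemma size_shuffles s t : size (shuffles s t) = 'C(size s + size t, size s).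
Proof.
elim: s t => [|x s IHs] t; first by rewrite bin0.
elim: t => [|y t IHt]; first by rewrite shuffless0 addn0 binn.
by rewrite shuffles_cons size_cat !size_map IHs IHt /= addnS addSn binS addnS addnC.
Qed.

Lemma shuffles_uniq s t : uniq (s ++ t) -> uniq (shuffles s t).
Proof.
elim: s t => [|x s IHs] t; first by [].
elim: t => [|y t IHt] st_uniq; first by rewrite shuffless0.
rewrite shuffles_cons cat_uniq !(map_inj_uniq (@cons_injr _)) IHs; last by case/andP: st_uniq.
rewrite IHt; last by apply: subseq_uniq st_uniq; apply: cat_subseq (subseq_cons _ _).
rewrite andbT; apply/hasPn => _ /mapP[u _ ->]; apply/mapP => -[v _ [yx _]].
by move: st_uniq; rewrite yx /= mem_cat inE eqxx orbT.
Qed.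

Lemma shuffles_sound s t u : u \in shuffles s t ->
  [/\ perm_eq u (s ++ t), subseq s u & subseq t u].
Proof.
elim: s t u => [|x s IHs] t u; first by rewrite inE => /eqP->; rewrite sub0seq.
elim: t u => [|y t IHt] u; first by rewrite shuffless0 inE cats0 => /eqP->.
rewrite shuffles_cons mem_cat => /orP[] /mapP[v v_in ->].
  have [perm_v sub_s sub_t] := IHs _ _ v_in.
  by rewrite perm_cons /= eqxx; split=> //; apply: subseq_trans sub_t (subseq_cons _ _).
have [perm_v sub_s sub_t] := IHt _ v_in.
split; last by rewrite /= eqxx.
  by rewrite perm_sym -[y :: t]cat1s perm_catCA /= perm_cons perm_sym.
exact: subseq_trans sub_s (subseq_cons _ _).
Qed.

Lemma shuffles_complete s t u : uniq (s ++ t) -> perm_eq u (s ++ t) ->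
  subseq s u -> subseq t u -> u \in shuffles s t.
Proof.
have subseq_eq v w : subseq v w -> perm_eq w v -> w \in [:: v].
  by move=> sub_vw /perm_size sz; rewrite inE eq_sym -(size_subseq_leqif sub_vw).2 sz.
elim: u s t => [|z u IHu] s t st_uniq perm_u sub_s sub_t.
  by move: sub_s sub_t; rewrite !subseq0 => /eqP-> /eqP->.
case: s st_uniq perm_u sub_s => [|x s] st_uniq perm_u sub_s; first exact: subseq_eq.
case: t st_uniq perm_u sub_t => [|y t] st_uniq perm_u sub_t.
  by rewrite shuffless0; apply: subseq_eq; rewrite // -(cats0 (x :: s)).
have zu_uniq : uniq (z :: u) by rewrite (perm_uniq perm_u).
have [zNu u_uniq] := andP zu_uniq.
rewrite shuffles_cons mem_cat; case: (eqVneq z x) => [zx | zNx].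
  have xNyt : x \notin y :: t.
    by move: st_uniq; rewrite cat_cons cons_uniq mem_cat negb_or => /andP[/andP[]].
  rewrite zx map_f // IHu //.
  - by case/andP: st_uniq.
  - by rewrite zx perm_cons in perm_u.
  - by rewrite /= zx eqxx in sub_s.
  - by rewrite -(subseq_cons_notin _ xNyt) -zx.
have sub_s' : subseq (x :: s) u by rewrite /= eq_sym (negPf zNx) in sub_s.
have zy : z = y.
  apply/eqP; apply: contraNT zNu => zNy.
  have sub_t' : subseq (y :: t) u by rewrite /= eq_sym (negPf zNy) in sub_t.
  have : z \in (x :: s) ++ y :: t by rewrite -(perm_mem perm_u) mem_head.
  by rewrite mem_cat => /orP[/(mem_subseq sub_s') | /(mem_subseq sub_t')].
rewrite zy map_f ?orbT // IHu //.
- by apply: subseq_uniq st_uniq; apply: cat_subseq (subseq_cons _ _).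
- by move: perm_u; rewrite zy perm_sym -[y :: t]cat1s perm_catCA /= perm_cons perm_sym.
- by rewrite /= zy eqxx in sub_t.
Qed.

Lemma shuffles_catl r s t u : u \in shuffles s t -> r ++ u \in shuffles (r ++ s) t.
Proof.
move=> u_in; elim: r => [|x r IHr] //; move: IHr; rewrite !cat_cons.
case: t {u_in} => [|y t]; first by rewrite !shuffless0 !inE => /eqP->.
by rewrite shuffles_cons mem_cat => ?; rewrite map_f.
Qed.

End Subsequences.

(** * The patterns 123 and 3412 and the circular reduction *)

Definition has123 (s : seq nat) :=
  exists x y z, [/\ x < y, y < z & subseq [:: x; y; z] s].

Definition has3412 (s : seq nat) :=
  exists a b c d, [/\ a < b, b < c, c < d & subseq [:: c; d; a; b] s].

Definition avoids_123_3412 (s : seq nat) := ~ has123 s /\ ~ has3412 s.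

Lemma has123_subseq s t : subseq s t -> has123 s -> has123 t.
Proof.
by move=> sub [x [y [z [xy yz sub_s]]]]; exists x, y, z; split=> //; apply: subseq_trans sub.
Qed.

Lemma has3412_subseq s t : subseq s t -> has3412 s -> has3412 t.
Proof.
move=> sub [a [b [c [d [ab bc cd sub_s]]]]].
by exists a, b, c, d; split=> //; apply: subseq_trans sub.
Qed.

Lemma avoids_123_3412_subseq s t :
  subseq s t -> avoids_123_3412 t -> avoids_123_3412 s.
Proof.
by move=> sub [no123 no3412]; split=> [/(has123_subseq sub) | /(has3412_subseq sub)].
Qed.

Lemma red_1234P t : red t = [:: 1; 2; 3; 4] <->
  exists a b c d, t = [:: a; b; c; d] /\ [/\ a < b, b < c & c < d].
Proof.
split=> [| [a [b [c [d [-> [ab bc cd]]]]]]]; last by rewrite /red /=; repeat f_equal; lia.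
case: t => [|a [|b [|c [|d [|e t]]]]] //; rewrite /red /= => -[].
by exists a, b, c, d; split=> //; split; lia.
Qed.

Lemma occurs_circ_1234P s : occurs_circ [:: 1; 2; 3; 4] s <->
  exists2 i, i < size s & exists a b c d,
    [/\ a < b, b < c, c < d & subseq [:: a; b; c; d] (rot i s)].
Proof.
split=> [/existsP[i /existsP[m /eqP/red_1234P[a [b [c [d [m_eq inc]]]]]]] | ].
  exists i => //; exists a, b, c, d; case: inc => ab bc cd; split=> //.
  by rewrite -m_eq mask_subseq.
case=> i i_lt [a [b [c [d [ab bc cd /subseqP[m sz_m m_eq]]]]]].
have sz_m' : size m == size s by rewrite sz_m size_rot.
apply/existsP; exists (Ordinal i_lt); apply/existsP; exists (Tuple sz_m') => /=.
by rewrite -m_eq; apply/eqP/red_1234P; exists a, b, c, d.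
Qed.

Lemma rot_rcons (T : Type) (t : seq T) x i :
  i <= size t -> rot i (rcons t x) = drop i t ++ x :: take i t.
Proof.
move=> le_i; rewrite -{1}(cat_take_drop i t) rcons_cat -{1}(size_takel le_i).
by rewrite rot_size_cat cat_rcons.
Qed.

Lemma rot_rcons_1234_patterns t N i : {in t, forall x, x < N} ->
  (exists a b c d, [/\ a < b, b < c, c < d & subseq [:: a; b; c; d] (drop i t ++ N :: take i t)]) ->
  has123 t \/ has3412 t.
Proof.
move=> lt_N [a [b [c [d [ab bc cd]]]]].
have inc3 x y z w : x < y -> y < z -> subseq [:: x; y; z] w -> subseq w t -> has123 t.
  by move=> xy yz sub_w sub_t; exists x, y, z; split=> //; apply: subseq_trans sub_t.
have sub1 := take_subseq t i; have sub2 := drop_subseq t i.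
case/subseq_pivot => [/subseq_cat_split | ] [u [v [abcd_eq sub_u sub_v]]].
  move: sub_u sub_v; case: u abcd_eq => [|? [|? [|? [|? [|? ?]]]]] //=.
  - move=> <- _ sub_v; left; apply: (inc3 a b c _ ab bc _ (subseq_trans sub_v sub1)).
    exact: (prefix_subseq [:: a; b; c] [:: d]).
  - by case=> <- <- _ sub_v; left; apply: (inc3 b c d _ bc cd _ (subseq_trans sub_v sub1)).
  - case=> <- <- <- sub_u sub_v; right; exists a, b, c, d; split=> //.
    by rewrite -(cat_take_drop i t) -[[:: c; d; a; b]]/([:: c; d] ++ [:: a; b]) cat_subseq.
  - by case=> <- <- <- _ sub_u _; left; apply: (inc3 a b c _ ab bc _ (subseq_trans sub_u sub2)).
  - case=> <- <- <- <- _ sub_u _; left; apply: (inc3 a b c _ ab bc _ (subseq_trans sub_u sub2)).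
    exact: (prefix_subseq [:: a; b; c] [:: d]).
have v_lt y : y \in v -> y < N by move/(mem_subseq (subseq_trans sub_v sub1)); apply: lt_N.
move: sub_u v_lt; case: u abcd_eq => [|? [|? [|? [|? ?]]]] //=.
- by case=> aN <- _ /(_ b (mem_head _ _)); lia.
- by case=> _ bN <- _ /(_ c (mem_head _ _)); lia.
- by case=> _ _ cN <- _ /(_ d (mem_head _ _)); lia.
- by case=> <- <- <- _ _ sub_u _; left; apply: (inc3 a b c _ ab bc _ (subseq_trans sub_u sub2)).
- by case=> _ _ _ _ /(congr1 size); rewrite size_cat addnS.
Qed.

Lemma occurs_circ_1234_rconsP t N : {in t, forall x, x < N} ->
  occurs_circ [:: 1; 2; 3; 4] (rcons t N) <-> has123 t \/ has3412 t.
Proof.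
move=> lt_N; rewrite occurs_circ_1234P size_rcons; split.
  by case=> i /ltnSE le_i; rewrite rot_rcons //; apply: rot_rcons_1234_patterns.
case=> [[x [y [z [xy yz sub]]]] | [a [b [c [d [ab bc cd]]]]]].
  exists 0 => //; exists x, y, z, N; split=> //.
    by apply/lt_N/(mem_subseq sub); rewrite !inE eqxx !orbT.
  by rewrite rot0 -cats1 -[[:: x; y; z; N]]/([:: x; y; z] ++ [:: N]) cat_subseq.
case/(@cat_subseq_split _ [:: c; d] [:: a; b]) => t1 [t2 [t_eq sub1 sub2]].
exists (size t1); first by rewrite t_eq size_cat ltnS leq_addr.
exists a, b, c, d; split=> //.
rewrite t_eq rcons_cat rot_size_cat -[[:: a; b; c; d]]/([:: a; b] ++ [:: c; d]).
by apply: cat_subseq => //; apply: subseq_trans sub2 (subseq_rcons _ _).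
Qed.

(** * Decreasing sequences and the insertion of the maximum *)

Lemma gtn_trans : transitive gtn.
Proof. by move=> y x z /= yx zy; apply: ltn_trans zy yx. Qed.

Lemma gtn_irr : irreflexive gtn.
Proof. by move=> x /=; rewrite ltnn. Qed.

Lemma gtn_anti : antisymmetric gtn.
Proof. by move=> x y /andP[] /=; lia. Qed.

Lemma sorted_gtnP s : reflect (forall y z, subseq [:: y; z] s -> z < y) (sorted gtn s).
Proof.
apply: (iffP idP) => [s_decr y z sub | no_ascent].
  by have /= /andP[] := subseq_sorted gtn_trans sub s_decr.
elim: s no_ascent => [|x s IHs] //= no_ascent.
rewrite (path_sortedE gtn_trans) IHs; last first.
  by move=> y z sub; apply: no_ascent; apply: subseq_trans sub (subseq_cons _ _).
by rewrite andbT; apply/allP => y y_s; apply: no_ascent; rewrite /= eqxx sub1seq.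
Qed.

Lemma unsorted_gtn_ascent s : uniq s -> ~~ sorted gtn s ->
  exists y z, y < z /\ subseq [:: y; z] s.
Proof.
elim: s => [|x [|x' s] IHs] // /andP[xNs s_uniq].
rewrite /= negb_and => /orP[x'_ge | unsorted].
  exists x, x'; split; last by rewrite /= !eqxx sub0seq.
  by rewrite ltn_neqAle leqNgt x'_ge andbT; apply: contraNneq xNs => ->; apply: mem_head.
have [y [z [yz sub]]] := IHs s_uniq unsorted.
by exists y, z; split=> //; apply: subseq_trans sub (subseq_cons _ _).
Qed.

Lemma sorted_gtn_no_ascent s : uniq s ->
  (forall y z, y < z -> ~ subseq [:: y; z] s) -> sorted gtn s.
Proof.
move=> s_uniq no_ascent; apply/sorted_gtnP => y z sub.
have := subseq_uniq sub s_uniq; rewrite /= inE andbT => yNz.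
by rewrite ltn_neqAle eq_sym yNz leqNgt; apply/negP => /no_ascent.
Qed.

Lemma sorted_gtn_cat s t : sorted gtn s -> sorted gtn t ->
  {in s & t, forall a b, b < a} -> sorted gtn (s ++ t).
Proof.
rewrite !(sorted_pairwise gtn_trans) pairwise_cat => -> -> gt_st; rewrite !andbT.
by apply/allrelP => a b a_s b_t; apply: gt_st.
Qed.

Definition ascent_below (a : nat) (s : seq nat) :=
  exists y z, [/\ y < z, z < a & subseq [:: y; z] s].

Lemma avoids_insert_maxP A B m : {in A ++ B, forall x, x < m} -> uniq A ->
  avoids_123_3412 (A ++ m :: B) <->
  [/\ avoids_123_3412 (A ++ B), sorted gtn A & {in A, forall a, ~ ascent_below a B}].
Proof.
move=> lt_m A_uniq.
have ltA x : x \in A -> x < m by move=> x_A; apply: lt_m; rewrite mem_cat x_A.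
have ltB x : x \in B -> x < m by move=> x_B; apply: lt_m; rewrite mem_cat x_B orbT.
split=> [[no123 no3412] | [[no123 no3412] A_decr no_ascent]].
  split.
  - apply: avoids_123_3412_subseq (conj no123 no3412).
    exact: cat_subseq (subseq_cons _ _).
  - apply: (sorted_gtn_no_ascent A_uniq) => y z yz sub.
    apply: no123; exists y, z, m; split=> //.
      by apply/ltA/(mem_subseq sub); rewrite !inE eqxx orbT.
    by rewrite -[[:: y; z; m]]/([:: y; z] ++ [:: m]) cat_subseq // sub1seq mem_head.
  - move=> a a_A [y [z [yz za sub]]]; apply: no3412; exists y, z, a, m; split=> //.
      exact: ltA.
    by rewrite -[[:: a; m; y; z]]/([:: a] ++ [:: m; y; z]) cat_subseq ?sub1seq //= eqxx.
have B_head x v : subseq (x :: v) B -> x < m by move/mem_subseq/(_ x (mem_head _ _)); apply: ltB.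
split.
  case=> x [y [z [xy yz /subseq_pivot[sub | [u [v [xyz_eq sub_u sub_v]]]]]]].
    by apply: no123; exists x, y, z.
  case: u xyz_eq sub_u => [|? [|? [|? ?]]] //= -[].
  - by move=> xm yv; rewrite -yv in sub_v; have := B_head _ _ sub_v; lia.
  - by move=> _ ym zv; rewrite -zv in sub_v; have := B_head _ _ sub_v; lia.
  - by move=> <- <- zm _ sub_u; have /= := (sorted_gtnP _ A_decr) _ _ sub_u; lia.
  - by move=> _ _ _ /(congr1 size); rewrite size_cat addnS.
case=> a [b [c [d [ab bc cd /subseq_pivot[sub | [u [v [abcd_eq sub_u sub_v]]]]]]]].
  by apply: no3412; exists a, b, c, d.
case: u abcd_eq sub_u => [|? [|? [|? [|? ?]]]] //= -[].
- by move=> cm dv; rewrite -dv in sub_v; have := B_head _ _ sub_v; lia.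
- move=> <- dm abv; rewrite -abv in sub_v; rewrite sub1seq => c_A.
  by apply: (no_ascent c c_A); exists a, b.
- by move=> _ _ am bv; rewrite -bv in sub_v; have := B_head _ _ sub_v; lia.
- move=> <- <- _ _ _ /(subseq_trans (prefix_subseq [:: c; d] [:: _])) sub_u.
  by have := (sorted_gtnP _ A_decr) _ _ sub_u; lia.
- by move=> _ _ _ _ /(congr1 size); rewrite size_cat addnS.
Qed.

Lemma decreasing_cat_avoids A B : sorted gtn A -> sorted gtn B -> avoids_123_3412 (A ++ B).
Proof.
move=> /sorted_gtnP A_decr /sorted_gtnP B_decr; split.
  case=> x [y [z [xy yz /subseq_cat_split[u [v [xyz_eq]]]]]].
  move: xyz_eq; case: u => [|? [|? [|? [|? ?]]]] //=.
  - move=> <- _ /(subseq_trans (prefix_subseq [:: x; y] [:: z])).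
    by move/B_decr; lia.
  - by case=> <- <- _ /B_decr; lia.
  - by case=> <- <- <- /A_decr; lia.
  - case=> <- <- <- _ /(subseq_trans (prefix_subseq [:: x; y] [:: z])).
    by move/A_decr; lia.
case=> a [b [c [d [ab bc cd /subseq_cat_split[u [v [abcd_eq]]]]]]].
move: abcd_eq; case: u => [|? [|? [|? [|? [|? ?]]]]] //=.
- move=> <- _ /(subseq_trans (prefix_subseq [:: c; d] [:: a; b])).
  by move/B_decr; lia.
- by case=> <- <- _ /(subseq_trans (subseq_cons _ _)) /B_decr; lia.
- by case=> <- <- <- _ /B_decr; lia.
- case=> <- <- <- <- /(subseq_trans (prefix_subseq [:: c; d] [:: _])).
  by move/A_decr; lia.
- case=> <- <- <- <- _ /(subseq_trans (prefix_subseq [:: c; d] [:: a; b])).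
  by move/A_decr; lia.
Qed.

Section DecreasingShuffles.

Variables lo hi : seq nat.
Hypotheses (lo_decr : sorted gtn lo) (hi_decr : sorted gtn hi).
Hypothesis lo_lt_hi : {in lo & hi, forall a b, a < b}.

Lemma decreasing_runs_uniq : uniq (lo ++ hi).
Proof.
rewrite cat_uniq !(sorted_uniq gtn_trans gtn_irr) // andbT /=; apply/hasPn => x x_hi.
by apply/negP => x_lo; have := lo_lt_hi x_lo x_hi; rewrite ltnn.
Qed.

Lemma shuffle_ascent w x y : w \in shuffles lo hi -> x < y -> subseq [:: x; y] w ->
  x \in lo /\ y \in hi.
Proof.
move=> w_in xy sub; have [perm_w sub_lo sub_hi] := shuffles_sound w_in.
have w_uniq : uniq w by rewrite (perm_uniq perm_w) decreasing_runs_uniq.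
have not_both r : sorted gtn r -> subseq r w -> x \in r -> y \in r -> False.
  move=> /sorted_gtnP r_decr /(subseq_uniqP w_uniq) r_eq x_r y_r.
  have : subseq [:: x; y] r by rewrite r_eq subseq_filter /= x_r y_r sub.
  by move/r_decr; lia.
have : x \in lo ++ hi by rewrite -(perm_mem perm_w) (mem_subseq sub) ?mem_head.
have : y \in lo ++ hi by rewrite -(perm_mem perm_w) (mem_subseq sub) // !inE eqxx orbT.
rewrite !mem_cat; case: (boolP (x \in lo)) => x_lo; case: (boolP (y \in lo)) => y_lo //=.
- by move=> _ _; case: (not_both _ lo_decr sub_lo x_lo y_lo).
- by move=> _ x_hi; have := lo_lt_hi y_lo x_hi; lia.
- by move=> y_hi x_hi; case: (not_both _ hi_decr sub_hi x_hi y_hi).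
Qed.

Lemma shuffle_avoids w : w \in shuffles lo hi -> avoids_123_3412 w.
Proof.
move=> w_in; have ascent := shuffle_ascent w_in; split.
  case=> x [y [z [xy yz sub]]].
  have [_ y_hi] := ascent x y xy (subseq_trans (prefix_subseq [:: x; y] [:: z]) sub).
  have [y_lo _] := ascent y z yz (subseq_trans (subseq_cons _ _) sub).
  by have := lo_lt_hi y_lo y_hi; rewrite ltnn.
case=> a [b [c [d [ab bc cd sub]]]].
have [c_lo _] := ascent c d cd (subseq_trans (prefix_subseq [:: c; d] [:: a; b]) sub).
have [_ b_hi] := ascent a b ab (subseq_trans (suffix_subseq [:: c; d] [:: a; b]) sub).
by have := lo_lt_hi c_lo b_hi; lia.
Qed.

Lemma count_sorted_shuffles : count (sorted gtn) (shuffles lo hi) = 1.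
Proof.
have hi_lo_decr : sorted gtn (hi ++ lo).
  by apply: sorted_gtn_cat => // a b a_hi b_lo; apply: lo_lt_hi.
have hi_lo_in : hi ++ lo \in shuffles lo hi.
  apply: shuffles_complete; rewrite ?decreasing_runs_uniq ?suffix_subseq ?prefix_subseq //.
  by rewrite perm_catC.
rewrite (@eq_in_count _ _ (pred1 (hi ++ lo))); last first.
  move=> w w_in /=; apply/idP/eqP => [w_decr | -> //].
  have [perm_w _ _] := shuffles_sound w_in.
  by apply: (sorted_eq gtn_trans gtn_anti) => //; rewrite (perm_trans perm_w) // perm_catC.
by rewrite count_uniq_mem ?shuffles_uniq ?decreasing_runs_uniq // hi_lo_in.
Qed.

End DecreasingShuffles.

(** * The three families of avoiders *)

Definition riota a n := rev (iota a n).

Lemma mem_riota a n x : (x \in riota a n) = (a <= x < a + n).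
Proof. by rewrite mem_rev mem_iota. Qed.

Lemma size_riota a n : size (riota a n) = n.
Proof. by rewrite size_rev size_iota. Qed.

Lemma riota_uniq a n : uniq (riota a n).
Proof. by rewrite rev_uniq iota_uniq. Qed.

Lemma riota_decr a n : sorted gtn (riota a n).
Proof. by rewrite rev_sorted; apply: sub_sorted (iota_ltn_sorted a n) => x y /=. Qed.

Lemma perm_riota a n : perm_eq (riota a n) (iota a n).
Proof. by rewrite /riota perm_rev. Qed.

Lemma riotaD a m n : riota a (m + n) = riota (a + m) n ++ riota a m.
Proof. by rewrite /riota iotaD rev_cat. Qed.

Lemma decreasing_perm_iota s k : sorted gtn s -> perm_eq s (iota 1 k) -> s = riota 1 k.
Proof.
move=> s_decr perm_s; apply: (sorted_eq gtn_trans gtn_anti) => //; first exact: riota_decr.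
by rewrite (perm_trans perm_s) // perm_sym perm_riota.
Qed.

Lemma perm_insert_max k A B :
  perm_eq (A ++ k.+1 :: B) (iota 1 k.+1) = perm_eq (A ++ B) (iota 1 k).
Proof.
rewrite -(addn1 k) iotaD add1n addn1 /= cats1 perm_sym perm_rcons perm_sym.
by rewrite -[k.+1 :: B]cat1s perm_catCA /= perm_cons.
Qed.

Lemma perm_iota_lt s k : perm_eq s (iota 1 k) -> {in s, forall x, x < k.+1}.
Proof. by move=> perm_s x; rewrite (perm_mem perm_s) mem_iota; lia. Qed.

Lemma riota_split p r q :
  riota 1 (p + r + q) = riota (p + r).+1 q ++ riota p.+1 r ++ riota 1 p.
Proof. by rewrite !riotaD !add1n. Qed.

Lemma perm_iota_uniq s k : perm_eq s (iota 1 k) -> uniq s.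
Proof. by move/perm_uniq->; apply: iota_uniq. Qed.

Lemma cons_max_avoids k t : perm_eq t (iota 1 k) -> avoids_123_3412 t ->
  avoids_123_3412 (k.+1 :: t).
Proof.
by move=> perm_t t_av; apply/(@avoids_insert_maxP [::] t k.+1 (perm_iota_lt perm_t)).
Qed.

Lemma split_runs_avoids k A : subseq A (riota 1 k) ->
  avoids_123_3412 (A ++ k.+1 :: [seq z <- riota 1 k | z \notin A]).
Proof.
move=> sub_A; have A_decr := subseq_sorted gtn_trans sub_A (riota_decr 1 k).
have B_decr := sorted_filter gtn_trans [pred z | z \notin A] (riota_decr 1 k).
have lt_max : {in A ++ [seq z <- riota 1 k | z \notin A], forall x, x < k.+1}.
  move=> x; rewrite mem_cat => /orP[/(mem_subseq sub_A) | /(mem_subseq (filter_subseq _ _))];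
    by rewrite mem_riota; lia.
apply/(avoids_insert_maxP lt_max (subseq_uniq sub_A (riota_uniq 1 k))); split=> //.
- exact: decreasing_cat_avoids.
- by move=> a _ [y [z [yz _ /(sorted_gtnP _ B_decr)]]]; lia.
Qed.

Lemma block_avoids p r q B : B \in shuffles (riota 1 p) (riota (p + r).+1 q) ->
  avoids_123_3412 (riota p.+1 r ++ (p + r + q).+1 :: B).
Proof.
move=> B_in; have [perm_B _ _] := shuffles_sound B_in.
have lo_lt_hi : {in riota 1 p & riota (p + r).+1 q, forall a b, a < b}.
  by move=> a b; rewrite !mem_riota; lia.
have lt_max : {in riota p.+1 r ++ B, forall x, x < (p + r + q).+1}.
  by move=> x; rewrite mem_cat (perm_mem perm_B) mem_cat !mem_riota; lia.
apply/(avoids_insert_maxP lt_max (riota_uniq _ _)); split.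
- have mid_lo : riota p.+1 r ++ riota 1 p = riota 1 (p + r) by rewrite riotaD add1n.
  apply: shuffle_avoids (shuffles_catl _ B_in); rewrite ?mid_lo ?riota_decr //.
  by move=> a b; rewrite !mem_riota; lia.
- exact: riota_decr.
- move=> a a_in [y [z [yz za sub]]].
  have [_] := shuffle_ascent (riota_decr _ _) (riota_decr _ _) lo_lt_hi B_in yz sub.
  by move: a_in; rewrite !mem_riota; lia.
Qed.

Section BlockStructure.

Variables A B : seq nat.
Hypotheses (AB_uniq : uniq (A ++ B)) (AB_avoids : avoids_123_3412 (A ++ B)).
Hypothesis no_ascent_below : {in A, forall a, ~ ascent_below a B}.

Let B_uniq : uniq B. Proof. by move: AB_uniq; rewrite cat_uniq => /and3P[]. Qed.

Let A_notin_B a : a \in A -> a \notin B.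
Proof.
move: AB_uniq; rewrite cat_uniq => /and3P[_ /hasPn A_notin _] a_A.
by apply/negP => /A_notin; rewrite a_A.
Qed.

Lemma ascent_straddles a y z : a \in A -> y < z -> subseq [:: y; z] B -> y < a < z.
Proof.
move=> a_A yz sub.
have [y_B z_B] : y \in B /\ z \in B by rewrite !(mem_subseq sub) // !inE eqxx ?orbT.
have a_neq x : x \in B -> a != x by move=> x_B; apply: contraNneq (A_notin_B a_A) => ->.
have za : ~ z < a by move=> za; apply: (no_ascent_below a_A); exists y, z.
have ay : ~ a < y.
  move=> ay; case: AB_avoids => no123 _; apply: no123; exists a, y, z; split=> //.
  by rewrite -[[:: a; y; z]]/([:: a] ++ [:: y; z]) cat_subseq ?sub1seq.
by move: (a_neq y y_B) (a_neq z z_B) => /eqP ? /eqP ?; lia.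
Qed.

Lemma ascent_not_between y0 z0 a1 a2 x : y0 < z0 -> subseq [:: y0; z0] B ->
  a1 \in A -> a2 \in A -> x \in B -> a1 < x -> x < a2 -> False.
Proof.
move=> y0z0 sub0 a1_A a2_A x_B a1x xa2.
have /andP[_ a2z0] := ascent_straddles a2_A y0z0 sub0.
have /andP[y0a1 _] := ascent_straddles a1_A y0z0 sub0.
rewrite subseq2_index // in sub0; case/and3P: sub0 => y0_B z0_B lt_y0z0.
case: (ltngtP (index x B) (index z0 B)) => [lt_xz0 | lt_z0x | eq_idx].
- case: AB_avoids => no123 _; apply: no123; exists a1, x, z0; split=> //; first by lia.
  rewrite -[[:: a1; x; z0]]/([:: a1] ++ [:: x; z0]) cat_subseq ?sub1seq //.
  by rewrite subseq2_index // x_B z0_B.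
- have sub : subseq [:: y0; x] B by rewrite subseq2_index // y0_B x_B (ltn_trans lt_y0z0).
  by have := ascent_straddles a2_A (ltn_trans y0a1 a1x) sub; lia.
- have x_z0 : x = z0 by rewrite -(nth_index 0 x_B) eq_idx nth_index.
  lia.
Qed.

Lemma decreasing_block_split : A != [::] -> ~~ sorted gtn B -> sorted gtn A ->
  exists lo hi, B \in shuffles lo hi /\ sorted gtn (hi ++ A ++ lo).
Proof.
move=> A_nil B_unsorted A_decr.
have [y0 [z0 [y0z0 sub0]]] := unsorted_gtn_ascent B_uniq B_unsorted.
have not_between := ascent_not_between y0z0 sub0.
have [a0 a0_A] : exists a0, a0 \in A by case: (A) A_nil => // a ? _; exists a; apply: mem_head.
have a0_neq x : x \in B -> x != a0 by move=> x_B; apply: contraNneq (A_notin_B a0_A) => <-.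
set lo := [seq x <- B | x < a0]; set hi := [seq x <- B | a0 < x].
have lo_lt_A x a : x \in lo -> a \in A -> x < a.
  rewrite mem_filter => /andP[xa0 x_B] a_A; rewrite ltnNge leq_eqVlt negb_or.
  apply/andP; split; first by apply: contraNneq (A_notin_B a_A) => ->.
  by apply/negP => ax; apply: (not_between a a0 x).
have A_lt_hi x a : x \in hi -> a \in A -> a < x.
  rewrite mem_filter => /andP[a0x x_B] a_A; rewrite ltnNge leq_eqVlt negb_or.
  apply/andP; split; first by apply: contraNneq (A_notin_B a_A) => <-.
  by apply/negP => xa; apply: (not_between a0 a x).
have lo_decr : sorted gtn lo.
  apply: (sorted_gtn_no_ascent (filter_uniq _ B_uniq)) => y z yz sub.
  have /andP[_ a0z] := ascent_straddles a0_A yz (subseq_trans sub (filter_subseq _ _)).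
  have : z \in lo by rewrite (mem_subseq sub) // !inE eqxx orbT.
  by rewrite mem_filter => /andP[za0 _]; lia.
have hi_decr : sorted gtn hi.
  apply: (sorted_gtn_no_ascent (filter_uniq _ B_uniq)) => y z yz sub.
  have /andP[ya0 _] := ascent_straddles a0_A yz (subseq_trans sub (filter_subseq _ _)).
  have : y \in hi by rewrite (mem_subseq sub) ?mem_head.
  by rewrite mem_filter => /andP[a0y _]; lia.
have lo_lt_hi : {in lo & hi, forall a b, a < b}.
  by move=> a b a_lo b_hi; apply: ltn_trans (lo_lt_A a a0 a_lo a0_A) (A_lt_hi b a0 b_hi a0_A).
have perm_B : perm_eq B (lo ++ hi).
  rewrite perm_sym (_ : hi = [seq x <- B | ~~ (x < a0)]) ?perm_filterC //.
  by apply: eq_in_filter => x /a0_neq/negPf x_a0; rewrite -leqNgt [a0 <= x]leq_eqVlt eq_sym x_a0.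
have decr : sorted gtn (hi ++ A ++ lo).
  apply: sorted_gtn_cat => //.
    by apply: sorted_gtn_cat => // a x a_A x_lo; apply: lo_lt_A x_lo a_A.
  by move=> x b x_hi; rewrite mem_cat => /orP[b_A | b_lo]; [apply: A_lt_hi | apply: lo_lt_hi].
exists lo, hi; split=> //; apply: shuffles_complete; rewrite ?filter_subseq //.
exact: decreasing_runs_uniq.
Qed.

Lemma block_structure k : A != [::] -> ~~ sorted gtn B -> perm_eq (A ++ B) (iota 1 k) ->
  sorted gtn A -> exists p r q,
    [/\ k = p + r + q, A = riota p.+1 r & B \in shuffles (riota 1 p) (riota (p + r).+1 q)].
Proof.
move=> A_nil B_unsorted perm_AB A_decr.
have [lo [hi [B_in decr]]] := decreasing_block_split A_nil B_unsorted A_decr.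
have [perm_B _ _] := shuffles_sound B_in.
have perm_all : perm_eq (hi ++ A ++ lo) (iota 1 k).
  by apply: perm_trans perm_AB; rewrite perm_catCA perm_cat2l perm_catC perm_sym.
have k_eq : k = size lo + size A + size hi.
  by have := perm_size perm_all; rewrite !size_cat size_iota => <-; rewrite addnC [size A + _]addnC.
exists (size lo), (size A), (size hi).
have := decreasing_perm_iota decr perm_all; rewrite k_eq riota_split.
move/eqP; rewrite eqseq_cat ?size_riota // => /andP[/eqP hi_eq].
rewrite eqseq_cat ?size_riota // => /andP[/eqP A_eq /eqP lo_eq].
by split=> //; rewrite -lo_eq -hi_eq.
Qed.

End BlockStructure.

Definition split_pairs k : seq (seq nat * seq nat) :=
  [seq (A, [seq z <- riota 1 k | z \notin A]) | A <- subseqs (riota 1 k) & A != [::]].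

Definition block_index k : seq (nat * nat) := [seq (s, p) | s <- iota 0 k, p <- iota 0 s.+1].

Definition unsorted_shuffles p r q : seq (seq nat) :=
  [seq B <- shuffles (riota 1 p) (riota (p + r).+1 q) | ~~ sorted gtn B].

(* An index (s, p) stands for the p lower values 1, ..., p and the s - p upper values,
   around the block of the k - s values p+1, ..., p+k-s placed before the maximum. *)
Definition block_pairs k : seq (seq nat * seq nat) :=
  [seq (riota x.1.2.+1 (k - x.1.1), x.2)
    | x <- [seq (sp, B) | sp <- block_index k,
                          B <- unsorted_shuffles sp.2 (k - sp.1) (sp.1 - sp.2)]].

Fixpoint avoiders k : seq (seq nat) :=
  if k is k'.+1 then
    [seq AB.1 ++ k :: AB.2
      | AB <- [seq ([::], t) | t <- avoiders k'] ++ split_pairs k' ++ block_pairs k']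
  else [:: [::]].

Lemma avoidersS k : avoiders k.+1 =
  [seq AB.1 ++ k.+1 :: AB.2
    | AB <- [seq ([::], t) | t <- avoiders k] ++ split_pairs k ++ block_pairs k].
Proof. by []. Qed.

Lemma mem_split_pairs k A B : ((A, B) \in split_pairs k) =
  [&& A != [::], subseq A (riota 1 k) & B == [seq z <- riota 1 k | z \notin A]].
Proof.
apply/mapP/and3P => [[A' ] | [A_nil sub_A /eqP->]]; last first.
  by exists A; rewrite // mem_filter A_nil mem_subseqs.
by rewrite mem_filter mem_subseqs => /andP[? ?] [-> ->].
Qed.

Lemma block_pairsP k A B : (A, B) \in block_pairs k <->
  exists p r q, [/\ k = p + r + q, 0 < r, A = riota p.+1 r & B \in unsorted_shuffles p r q].
Proof.
split=> [/mapP[_ /allpairsPdep[_ [B' [/allpairsPdep[s [p [s_in p_in ->]]] B_in ->]]] [-> ->]] |].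
  move: s_in p_in; rewrite !mem_iota => s_lt p_le.
  by exists p, (k - s), (s - p); split=> //; lia.
case=> p [r [q [k_eq r_gt0 -> B_in]]].
have kpq : k - (p + q) = r by lia.
apply/mapP; exists ((p + q, p), B); last by rewrite /= kpq.
apply/allpairsPdep; exists (p + q, p), B; split=> //=.
  by apply/allpairsPdep; exists (p + q), p; rewrite !mem_iota; split=> //; lia.
by rewrite kpq addKn.
Qed.

Lemma perm_split_pair k A : subseq A (riota 1 k) ->
  perm_eq (A ++ [seq z <- riota 1 k | z \notin A]) (iota 1 k).
Proof.
move=> /(subseq_uniqP (riota_uniq 1 k)) {1}->.
by rewrite (perm_filterC [in A]) perm_riota.
Qed.

Lemma perm_block_pair p r q B : B \in shuffles (riota 1 p) (riota (p + r).+1 q) ->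
  perm_eq (riota p.+1 r ++ B) (iota 1 (p + r + q)).
Proof.
move=> /shuffles_sound[perm_B _ _]; apply: perm_trans (perm_riota 1 _).
rewrite riota_split perm_sym perm_catCA perm_sym perm_cat2l.
by rewrite (perm_trans perm_B) // perm_catC.
Qed.

Lemma avoids_nil : avoids_123_3412 [::].
Proof. by split=> [[x [y [z []]]] | [a [b [c [d []]]]]]. Qed.

Lemma avoiders_sound k s : s \in avoiders k -> perm_eq s (iota 1 k) /\ avoids_123_3412 s.
Proof.
elim: k s => [|k IHk] s; first by rewrite inE => /eqP->; split; last exact: avoids_nil.
rewrite avoidersS.
case/mapP=> -[A B]; rewrite !mem_cat => /or3P[] AB_in -> /=; rewrite perm_insert_max.
- case/mapP: AB_in => t /IHk[perm_t t_avoids] [-> ->].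
  by split=> //; apply: cons_max_avoids.
- move: AB_in; rewrite mem_split_pairs => /and3P[_ sub_A /eqP->].
  by split; [apply: perm_split_pair | apply: split_runs_avoids].
- case/block_pairsP: AB_in => p [r [q [-> _ -> ]]]; rewrite mem_filter => /andP[_ B_in].
  by split; [apply: perm_block_pair | apply: block_avoids].
Qed.

Lemma decreasing_split_pair k A B : A != [::] -> sorted gtn A -> sorted gtn B ->
  perm_eq (A ++ B) (iota 1 k) -> (A, B) \in split_pairs k.
Proof.
move=> A_nil A_decr B_decr perm_AB.
have in_riota z : (z \in riota 1 k) = (z \in A ++ B).
  by rewrite (perm_mem (perm_riota 1 k)) (perm_mem perm_AB).
have AB_uniq := perm_iota_uniq perm_AB.
have A_eq : A = [seq z <- riota 1 k | z \in A].
  apply: (irr_sorted_eq gtn_trans gtn_irr) => //.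
    by apply: (sorted_filter gtn_trans); apply: riota_decr.
  by move=> z; rewrite mem_filter in_riota mem_cat; case: (z \in A).
rewrite mem_split_pairs A_nil /=; apply/andP; split; first by rewrite A_eq filter_subseq.
apply/eqP; apply: (irr_sorted_eq gtn_trans gtn_irr) => //.
  by apply: (sorted_filter gtn_trans); apply: riota_decr.
move=> z; rewrite mem_filter in_riota mem_cat.
case: (boolP (z \in B)) => z_B; last by rewrite orbF andNb.
by move: AB_uniq; rewrite cat_uniq orbT => /and3P[_ /hasPn/(_ z z_B) -> _].
Qed.

Lemma avoiders_complete k s : perm_eq s (iota 1 k) -> avoids_123_3412 s -> s \in avoiders k.
Proof.
elim: k s => [|k IHk] s perm_s s_avoids.
  by move: (perm_size perm_s) => /size0nil->; rewrite inE.
have max_in : k.+1 \in s by rewrite (perm_mem perm_s) mem_iota; lia.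
case/splitPr: max_in perm_s s_avoids => A B; rewrite perm_insert_max => perm_AB AB_avoids.
have A_uniq : uniq A by move: (perm_iota_uniq perm_AB); rewrite cat_uniq => /and3P[].
have [A_B_avoids A_decr no_ascent] :=
  (avoids_insert_maxP (perm_iota_lt perm_AB) A_uniq).1 AB_avoids.
rewrite avoidersS; apply/mapP; exists (A, B) => //; rewrite !mem_cat.
have [A_nil | A_nnil] := eqVneq A [::].
  move: A_nil perm_AB A_B_avoids => -> perm_B B_avoids.
  by rewrite map_f // IHk.
have [B_decr | B_unsorted] := boolP (sorted gtn B).
  by rewrite decreasing_split_pair ?orbT.
have [p [r [q [k_eq A_eq B_in]]]] :=
  block_structure (perm_iota_uniq perm_AB) A_B_avoids no_ascent A_nnil B_unsorted perm_AB A_decr.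
apply/orP; right; apply/orP; right; apply/block_pairsP; exists p, r, q; split=> //.
- by move: A_nnil; rewrite A_eq -size_eq0 size_riota; lia.
- by rewrite mem_filter B_unsorted.
Qed.

(** * Uniqueness and counting *)

Lemma riota_inj n : 0 < n -> injective (riota ^~ n).
Proof. by case: n => // n _ a a' /(congr1 rev); rewrite !revK => -[]. Qed.

Lemma split_pairs_uniq k : uniq (split_pairs k).
Proof.
rewrite map_inj_uniq ?filter_uniq ?subseqs_uniq ?riota_uniq //.
by move=> A A' [].
Qed.

Lemma block_pairs_uniq k : uniq (block_pairs k).
Proof.
rewrite map_inj_in_uniq.
  apply: allpairs_uniq_dep => [|sp _|[? ?] [? ?] _ _ /= [-> ->] //].
    apply: allpairs_uniq_dep => [|s _|[? ?] [? ?] _ _ /= [-> ->] //]; exact: iota_uniq.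
  by rewrite filter_uniq ?shuffles_uniq ?decreasing_runs_uniq ?riota_decr // => a b;
    rewrite !mem_riota; lia.
move=> x0 x1 /allpairsPdep[[s0 p0] [B0 [idx0 _ ->]]] /allpairsPdep[[s1 p1] [B1 [idx1 _ ->]]].
case/allpairsPdep: idx0 => a0 [b0]; rewrite !mem_iota => -[s0_lt p0_le [-> ->]].
case/allpairsPdep: idx1 => a1 [b1]; rewrite !mem_iota => -[s1_lt p1_le [-> ->]].
case=> /= eq_riota ->.
have a_eq : a0 = a1 by move/(congr1 size): eq_riota; rewrite !size_riota; lia.
by move: eq_riota; rewrite a_eq => /riota_inj; rewrite subn_gt0 => /(_ s1_lt) [->].
Qed.

Lemma split_block_pairs_fst k A B : (A, B) \in split_pairs k ++ block_pairs k ->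
  A != [::] /\ {subset A <= riota 1 k}.
Proof.
rewrite mem_cat mem_split_pairs => /orP[/and3P[A_nil sub_A _] | /block_pairsP].
  by split=> // x /(mem_subseq sub_A).
case=> p [r [q [-> r_gt0 -> _]]].
by split=> [|x]; rewrite ?mem_riota -?size_eq0 ?size_riota; lia.
Qed.

Lemma insert_max_inj m :
  {in [pred AB : seq nat * seq nat | m \notin AB.1] &, injective (fun AB => AB.1 ++ m :: AB.2)}.
Proof.
by move=> [A B] [A' B'] /= mA mA' /eqP; rewrite eqseq_pivot2l // => /andP[/eqP-> /eqP->].
Qed.

Lemma avoiders_uniq k : uniq (avoiders k).
Proof.
elim: k => [|k IHk] //; rewrite avoidersS map_inj_in_uniq; last first.
  apply: sub_in2 (@insert_max_inj k.+1) => -[A B]; rewrite mem_cat => /orP[/mapP[t _ [-> _]] //|].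
  move/split_block_pairs_fst => [_ sub_A]; rewrite inE /=.
  by apply/negP => /sub_A; rewrite mem_riota; lia.
have pair_nil_inj : injective (fun t : seq nat => ([::] : seq nat, t)) by move=> t t' [].
rewrite cat_uniq (map_inj_uniq pair_nil_inj) IHk /=.
rewrite cat_uniq split_pairs_uniq block_pairs_uniq /= andbT; apply/andP; split.
  apply/hasPn => -[A B] /split_block_pairs_fst[A_nil _].
  by apply/mapP => -[t _ [A_eq _]]; rewrite A_eq in A_nil.
apply/hasPn => -[A B] /block_pairsP[p [r [q [_ _ _]]]].
rewrite mem_filter mem_split_pairs => /andP[B_unsorted _]; apply/negP => /and3P[_ _ /eqP B_eq].
by rewrite B_eq (sorted_filter gtn_trans) ?riota_decr in B_unsorted.
Qed.

Lemma size_split_pairs k : size (split_pairs k) = 2 ^ k - 1.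
Proof.
rewrite size_map size_filter; have := count_predC (pred1 [::]) (subseqs (riota 1 k)).
rewrite size_subseqs size_riota count_uniq_mem ?subseqs_uniq ?riota_uniq //.
by rewrite mem_subseqs sub0seq => <-; rewrite addKn.
Qed.

Lemma size_unsorted_shuffles p r q : size (unsorted_shuffles p r q) = 'C(p + q, p) - 1.
Proof.
have lo_lt_hi : {in riota 1 p & riota (p + r).+1 q, forall a b, a < b}.
  by move=> a b; rewrite !mem_riota; lia.
rewrite size_filter; have := count_predC (sorted gtn) (shuffles (riota 1 p) (riota (p + r).+1 q)).
rewrite count_sorted_shuffles ?riota_decr // size_shuffles !size_riota => <-.
by rewrite addKn.
Qed.

Lemma sum_binomial s : \sum_(p < s.+1) 'C(s, p) = 2 ^ s.
Proof. by rewrite -[2]/(1 + 1) expnDn; apply: eq_bigr => p _; rewrite !exp1n !muln1. Qed.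

Lemma sum_iota0 n (F : nat -> nat) : \sum_(i <- iota 0 n) F i = \sum_(i < n) F i.
Proof. by rewrite -(big_mkord xpredT) /index_iota subn0. Qed.

Lemma size_block_pairs k : size (block_pairs k) = \sum_(s < k) (2 ^ s - s.+1).
Proof.
rewrite size_map size_allpairs_dep sumnE big_map big_allpairs_dep sum_iota0.
apply: eq_bigr => s _; rewrite sum_iota0 (eq_bigr (fun p : 'I_s.+1 => 'C(s, p) - 1)); last first.
  by move=> p _; rewrite /= size_unsorted_shuffles subnKC // -ltnS.
rewrite sumnB => [|p _]; last by rewrite bin_gt0 -ltnS.
by rewrite sum_binomial big_const_ord iter_addn_0 mul1n.
Qed.

Lemma sum_block_sizes k : \sum_(s < k) (2 ^ s - s.+1) + 'C(k.+1, 2) + 1 = 2 ^ k.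
Proof.
elim: k => [|k IHk]; first by rewrite big_ord0.
rewrite big_ord_recr /= binS bin1 expnS; move: IHk (ltn_expl k (ltnSn 1)).
by set S := \sum_(i < k) _; lia.
Qed.

Lemma size_avoiders k : size (avoiders k) + 2 * k.+1 + 'C(k.+1, 3) = 2 ^ k.+1 + 1.
Proof.
elim: k => [|k IHk] //.
rewrite avoidersS size_map !size_cat size_map size_split_pairs size_block_pairs.
move: IHk (sum_block_sizes k); rewrite [in 'C(k.+2, 3)]binS !expnS.
by set S := \sum_(i < k) _; lia.
Qed.

Lemma avoids_circ_rconsP k t : perm_eq t (iota 1 k) ->
  avoids_circ [:: 1; 2; 3; 4] (rcons t k.+1) <-> avoids_123_3412 t.
Proof.
move=> /perm_iota_lt lt_max; rewrite /avoids_circ.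
split=> [/negP no_occ | [no123 no3412]].
  by split=> pat; apply: no_occ; apply/(occurs_circ_1234_rconsP lt_max); [left | right].
by apply/negP => /(occurs_circ_1234_rconsP lt_max)[].
Qed.

Lemma count_avoids_circ k :
  count (avoids_circ [:: 1; 2; 3; 4]) (circ_perms k.+1) = size (avoiders k).
Proof.
rewrite /circ_perms -size_filter -(size_map (rcons^~ k.+1) (avoiders k)).
apply: perm_size; apply: uniq_perm.
- by rewrite !filter_uniq ?permutations_uniq.
- by rewrite (map_inj_uniq (@rcons_injl _ _)) avoiders_uniq.
move=> s; rewrite !mem_filter mem_permutations.
apply/and3P/mapP; last first.
  case=> t /avoiders_sound[perm_t t_avoids] ->; split; first exact/(avoids_circ_rconsP perm_t).
    by rewrite last_rcons.
  by rewrite -cats1 perm_insert_max cats0.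
case=> s_avoids /eqP last_s perm_s.
case/lastP: s s_avoids last_s perm_s => [|t x] //; rewrite last_rcons => s_avoids x_eq perm_s.
rewrite x_eq in s_avoids perm_s; rewrite -cats1 perm_insert_max cats0 in perm_s.
exists t; last by rewrite x_eq.
by apply: (avoiders_complete perm_s); apply/(avoids_circ_rconsP perm_s).
Qed.

Theorem theorem3 (n : nat) : 0 < n ->
  ((count (avoids_circ [:: 1; 2; 3; 4]%N) (circ_perms n))%:Z
    = (2 ^ n)%:Z + 1 - (2 * n)%:Z - ('C(n, 3))%:Z)%R.
Proof.
case: n => [|k] // _; rewrite count_avoids_circ.
have := size_avoiders k; lia.
Qed.
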